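(* Let $n_1,n_2,n_3\ge2$, $r\ge1$, $b>0$, $\beta\ge3$ and $\vartheta=2^{\lceil\beta\log_2(n_1\vee n_2)\rceil}$. Let $\mathcal{A}^*\in\mathbb{R}_+^{n_1\times r\times n_3}$ with $0\le\mathcal{A}^*_{ijk}\le1$, $\mathcal{B}^*\in\mathbb{R}_+^{r\times n_2\times n_3}$ with $0\le\mathcal{B}^*_{ijk}\le b$, and $\mathcal{X}^*=\mathcal{A}^*\diamond\mathcal{B}^*$. Let $\widetilde{\mathcal{A}}^*\in\mathfrak{L}$ be obtained by replacing each entry of $\mathcal{A}^*$ by its closest discretization level, and $\widetilde{\mathcal{B}}^*\in\mathfrak{D}$ be obtained by replacing each nonzero entry of $\mathcal{B}^*$ by its closest discretization level in $[0,b]$ and keeping zero entries zero. Then $\widetilde{\mathcal{X}}^*=\widetilde{\mathcal{A}}^*\diamond\widetilde{\mathcal{B}}^*$ satisfies \[ \|\widetilde{\mathcal{X}}^*-\mathcal{X}^*\|_\infty\le\frac{3rn_3b}{\vartheta}. \]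
   Context: Tensor-tensor product $\diamond$: for $\mathcal{X}\in\mathbb{R}^{n_1\times n_2\times n_3}$ with frontal slices $\mathbf{X}^{(1)},\dots,\mathbf{X}^{(n_3)}$ and $\mathcal{Y}\in\mathbb{R}^{n_2\times n_4\times n_3}$, $\mathcal{X}\diamond\mathcal{Y}$ is obtained by multiplying the block-circulant matrix with $(p,q)$ block $\mathbf{X}^{((p-q)\bmod n_3+1)}$ by the vertical stack of the frontal slices of $\mathcal{Y}$ and folding back. $\|\mathcal{X}\|_\infty=\max_{i,j,k}|\mathcal{X}_{ijk}|$; $m\vee n=\max\{m,n\}$. $\mathfrak{L}$ is the set of tensors in $\mathbb{R}_+^{n_1\times r\times n_3}$ whose entries each equal one of the $\vartheta$ uniformly spaced levels $\{0,\frac{1}{\vartheta-1},\dots,1\}$ of $[0,1]$; $\mathfrak{D}$ is the set of tensors in $\mathbb{R}_+^{r\times n_2\times n_3}$ whose entries are each either $0$ or one of the $\vartheta$ uniformly spaced levels $\{0,\frac{b}{\vartheta-1},\dots,b\}$ of $[0,b]$. *)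

From HB Require Import structures.
From mathcomp Require Import all_boot all_order all_algebra.
From mathcomp Require Import all_classical all_reals all_analysis.
Set Implicit Arguments. Unset Strict Implicit. Unset Printing Implicit Defensive.
Import Order.TTheory GRing.Theory Num.Theory.
Local Open Scope ring_scope.

Definition tensor (R : realType) (n1 n2 n3 : nat) := 'I_n1 -> 'I_n2 -> 'I_n3 -> R.

(* (k - q) mod n, as an element of 'I_n *)
Definition subord (n : nat) (k q : 'I_n) : 'I_n :=
  Ordinal (ltn_pmod (k + n - q)%N (leq_ltn_trans (leq0n q) (ltn_ord q))).

(* t-product: frontal slice k of X <> Y is sum_q X^((k-q) mod n3) Y^(q),
   i.e. block-circulant matrix of X times the stacked slices of Y. *)
Definition tprod (R : realType) (n1 n2 n3 n4 : nat)
  (X : tensor R n1 n2 n3) (Y : tensor R n2 n4 n3) : tensor R n1 n4 n3 :=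
  fun i j k => \sum_(q < n3) \sum_(l < n2) X i l (subord k q) * Y l j q.

Definition tsub (R : realType) (n1 n2 n3 : nat) (X Y : tensor R n1 n2 n3)
  : tensor R n1 n2 n3 := fun i j k => X i j k - Y i j k.

Definition tnorm_inf (R : realType) (n1 n2 n3 : nat) (X : tensor R n1 n2 n3) : R :=
  \big[Num.max/0]_(i < n1) \big[Num.max/0]_(j < n2) \big[Num.max/0]_(k < n3) `|X i j k|.

Definition vartheta (R : realType) (n1 n2 : nat) (beta : R) : nat :=
  (2 ^ `|Num.ceil (beta * (ln ((maxn n1 n2)%:R : R) / ln 2))|)%N.

Definition is_level (R : realType) (th : nat) (c : R) (x : R) : Prop :=
  exists t : nat, (t < th)%N /\ x = c * (t%:R / (th.-1)%:R).

(* y is a closest level (of [0,c], th levels) to x; ties broken arbitrarily *)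
Definition closest_level (R : realType) (th : nat) (c : R) (x y : R) : Prop :=
  is_level th c y /\ forall z, is_level th c z -> `|y - x| <= `|z - x|.

From HB Require Import structures.
From mathcomp Require Import all_boot all_order all_algebra.
From mathcomp Require Import all_classical all_reals all_analysis.
From mathcomp Require Import ring lra.
Set Implicit Arguments. Unset Strict Implicit. Unset Printing Implicit Defensive.
Import Order.TTheory GRing.Theory Num.Theory.
Local Open Scope ring_scope.

(* Rounding to the grid of step c/(theta-1) moves each entry by at most one
   step, so each of the r*n3 products summed in an entry of the t-product moves
   by at most |dA| |Bt| + |A| |dB| <= 2b/(theta-1).  Finally
   2/(theta-1) <= 3/theta as soon as theta >= 3, and in fact theta >= 2^3
   since beta >= 3 and log2 (n1 v n2) >= 1. *)

Section Levels.
Variables (R : realType) (th : nat) (c : R).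
Hypothesis th_gt1 : (1 < th)%N.

Let pred_th_gt0 : (0 < th.-1)%N.
Proof. by rewrite -ltnS prednK // ltnW. Qed.

Lemma is_level_bounds (z : R) : 0 <= c -> is_level th c z -> 0 <= z <= c.
Proof.
move=> c_ge0 [t [t_lt ->]].
have t_le : (t <= th.-1)%N by rewrite -ltnS prednK // ltnW.
rewrite mulr_ge0 ?divr_ge0 //= -[leRHS]mulr1 ler_wpM2l //.
by rewrite ler_pdivrMr ?ltr0n // mul1r ler_nat.
Qed.

Lemma exists_level_near (x : R) : 0 < c -> 0 <= x <= c ->
  exists2 z, is_level th c z & `|z - x| <= c / (th.-1)%:R.
Proof.
move=> c_gt0 /andP[x_ge0 x_le]; set h := c / (th.-1)%:R.
have h_gt0 : 0 < h by rewrite divr_gt0 ?ltr0n.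
have y_ge0 : 0 <= x / h by rewrite divr_ge0 // ltW.
have y_le : x / h <= (th.-1)%:R.
  by rewrite ler_pdivrMr // /h mulrCA divff ?mulr1 // pnatr_eq0 -lt0n.
set t := Num.truncn (x / h); have /andP[t_le t_gt] := truncn_itv y_ge0.
have t_le_pred : (t <= th.-1)%N.
  by rewrite truncn_le_nat; apply: le_lt_trans y_le _; rewrite ltr_nat.
exists (t%:R * h).
  exists t; split; first by rewrite (leq_ltn_trans t_le_pred) // ltn_predL ltnW.
  by rewrite /h mulrCA.
rewrite -[x](divfK (lt0r_neq0 h_gt0)) -mulrBl normrM (gtr0_norm h_gt0).
apply: ler_piMl (ltW h_gt0) _; rewrite ler_norml.
by rewrite -natr1 in t_gt; apply/andP; split; lra.
Qed.

Lemma closest_level_dist (x y : R) :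
  0 < c -> 0 <= x <= c -> closest_level th c x y -> `|y - x| <= c / (th.-1)%:R.
Proof.
move=> c_gt0 x_in [_ y_min].
have [z z_lvl z_near] := exists_level_near c_gt0 x_in.
exact: le_trans (y_min z z_lvl) z_near.
Qed.

Lemma sparse_closest_level_dist (x y : R) : 0 < c -> 0 <= x <= c ->
  (if x == 0 then y = 0 else closest_level th c x y) ->
  0 <= y <= c /\ `|y - x| <= c / (th.-1)%:R.
Proof.
move=> c_gt0 x_in; case: eqP => [-> ->|_ y_cl].
  by rewrite subrr normr0 lexx !ltW // divr_gt0 ?ltr0n.
split; last exact: closest_level_dist.
by case: y_cl => y_lvl _; apply: is_level_bounds y_lvl; apply: ltW.
Qed.

End Levels.

Lemma vartheta_ge (R : realType) (n1 n2 k : nat) (beta : R) :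
  (1 < maxn n1 n2)%N -> k%:R <= beta -> (2 ^ k <= vartheta n1 n2 beta)%N.
Proof.
move=> m_gt1 k_le; rewrite /vartheta leq_pexp2l //.
set m := maxn n1 n2.
have ln2_gt0 : 0 < ln (2 : R) by apply: ln_gt0; lra.
have log2m_ge1 : 1 <= ln (m%:R : R) / ln 2.
  by rewrite ler_pdivlMr // mul1r ler_ln ?posrE ?ler_nat ?ltr0n // ltnW.
have k_le_ceil : k%:R <= (Num.ceil (beta * (ln (m%:R : R) / ln 2)))%:~R :> R.
  apply: le_trans (ceil_ge _); have k_ge0 : 0 <= k%:R :> R by [].
  nra.
rewrite -[k%:R]/((k%:Z)%:~R : R) ler_int in k_le_ceil.
by case: (Num.ceil _) k_le_ceil => [n|n] //; rewrite lez_nat.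
Qed.

Lemma two_div_pred_le_three_div (R : realFieldType) (th : nat) :
  (3 <= th)%N -> 2 / (th.-1)%:R <= 3 / th%:R :> R.
Proof.
move=> th_ge3; have th_gt0 : (0 < th)%N by apply: leq_trans th_ge3.
have th_succ : th%:R = (th.-1)%:R + 1 :> R by rewrite natr1 prednK.
have th_pred : 2 <= (th.-1)%:R :> R by rewrite (ler_nat R 2) -ltnS prednK.
rewrite th_succ ler_pdivrMr; last lra.
by rewrite mulrAC ler_pdivlMr; lra.
Qed.

Lemma ler_dist_mul (R : numDomainType) (a a' b b' : R) :
  `|a' * b' - a * b| <= `|a' - a| * `|b'| + `|a| * `|b' - b|.
Proof.
have -> : a' * b' - a * b = (a' - a) * b' + a * (b' - b) by ring.
by rewrite -!normrM ler_normD.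
Qed.

Section TensorBounds.
Variable R : realType.

Lemma tnorm_inf_le (n1 n2 n3 : nat) (X : tensor R n1 n2 n3) e :
  0 <= e -> (forall i j k, `|X i j k| <= e) -> tnorm_inf X <= e.
Proof.
move=> e_ge0 X_le; rewrite /tnorm_inf.
by do 3![apply: bigmax_le => // ? _].
Qed.

Lemma tprod_dist_le (n1 n2 n3 n4 : nat) (X X' : tensor R n1 n2 n3)
    (Y Y' : tensor R n2 n4 n3) e :
  (forall i l k j q, `|X' i l k * Y' l j q - X i l k * Y l j q| <= e) ->
  forall i j k, `|tsub (tprod X' Y') (tprod X Y) i j k| <= e *+ n2 *+ n3.
Proof.
move=> term_le i j k; rewrite /tsub /tprod -sumrB.
apply: le_trans (ler_norm_sum _ _ _) _.
rewrite -[n3 in leRHS]card_ord -sumr_const; apply: ler_sum => q _.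
rewrite -sumrB; apply: le_trans (ler_norm_sum _ _ _) _.
by rewrite -[n2 in leRHS]card_ord -sumr_const; apply: ler_sum.
Qed.

End TensorBounds.

Theorem lemma2 (R : realType) (n1 n2 n3 r : nat) (b beta : R)
  (A At : tensor R n1 r n3) (B Bt : tensor R r n2 n3) :
  (2 <= n1)%N -> (2 <= n2)%N -> (2 <= n3)%N -> (1 <= r)%N ->
  0 < b -> 3 <= beta ->
  (forall i j k, 0 <= A i j k <= 1) ->
  (forall i j k, 0 <= B i j k <= b) ->
  (forall i j k, closest_level (vartheta n1 n2 beta) 1 (A i j k) (At i j k)) ->
  (forall i j k, if B i j k == 0 then Bt i j k = 0
                 else closest_level (vartheta n1 n2 beta) b (B i j k) (Bt i j k)) ->
  tnorm_inf (tsub (tprod At Bt) (tprod A B))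
    <= 3 * r%:R * n3%:R * b / (vartheta n1 n2 beta)%:R.
Proof.
move=> n1_ge2 _ _ _ b_gt0 beta_ge3 A_in B_in At_cl Bt_cl.
set th := vartheta n1 n2 beta in At_cl Bt_cl *.
have th_ge3 : (3 <= th)%N.
  exact: leq_trans (vartheta_ge (leq_trans n1_ge2 (leq_maxl n1 n2)) beta_ge3).
clearbody th; have th_gt1 : (1 < th)%N by apply: ltnW.
have term_le i l k j q :
    `|At i l k * Bt l j q - A i l k * B l j q| <= b * (2 / (th.-1)%:R).
  have dA := closest_level_dist th_gt1 ltr01 (A_in i l k) (At_cl i l k).
  have [/andP[Bt_ge0 Bt_le] dB] :=
    sparse_closest_level_dist th_gt1 b_gt0 (B_in l j q) (Bt_cl l j q).
  have /andP[A_ge0 A_le1] := A_in i l k.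
  apply: le_trans (ler_dist_mul _ _ _ _) _.
  rewrite (ger0_norm Bt_ge0) (ger0_norm A_ge0).
  have -> : b * (2 / (th.-1)%:R) = 1 / (th.-1)%:R * b + 1 * (b / (th.-1)%:R)
    by ring.
  by apply: lerD; apply: ler_pM.
have bound_ge0 : 0 <= 3 * r%:R * n3%:R * b / th%:R.
  by rewrite !mulr_ge0 ?invr_ge0 // ltW.
apply: tnorm_inf_le bound_ge0 _ => i j k.
apply: le_trans (tprod_dist_le term_le i j k) _.
have -> : 3 * r%:R * n3%:R * b / th%:R = b * (3 / th%:R) *+ r *+ n3 by ring.
by rewrite !lerMn2r ler_pM2l // two_div_pred_le_three_div ?orbT.
Qed.
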